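(* Let $p>5$ be a prime, $q=p^h$, and let $\mathcal{F}$ be the projective closure of the affine curve $ax^n+by^m=1$ defined over $\mathbb{F}_q$, where $a,b\in\mathbb{F}_q^*$ and $m,n$ are positive integers with $n\ge m>2$ and $p\nmid mn$. Then $\mathcal{F}$ is nonclassical with respect to the linear system $\Sigma_2$ of conics if and only if one of the following holds: (a) $p\mid (m-2)$ and $p\mid (n-2)$; (b) $p\mid (m+1)$ and $p\mid (n+1)$; (c) $p\mid (2m-1)$ and $p\mid (2n-1)$; (d) $p\mid (m-1)$ and $p\mid (n-1)(n-2)(2n-1)(n+1)$; (e) $p\mid (n-1)$ and $p\mid (m+1)(m-2)(2m-1)$.
   Context: For a geometrically irreducible projective plane curve $\mathcal{F}$ over $\mathbb{F}_q$ with function field $\overline{\mathbb{F}}_q(\mathcal{F})=\overline{\mathbb{F}}_q(x,y)$ and an integer $s\ge1$, let $\Sigma_s$ be the linear system of plane curves of degree $s$, $M=\binom{s+2}{2}-1$, and $\varphi_0,\dots,\varphi_M$ the monomials of degree $s$ in $x,y,1$. For a separating element $\tau$ and Hasse derivatives $D^{(k)}_\tau$, the order sequence $\varepsilon_0<\dots<\varepsilon_M$ of $\mathcal{F}$ with respect to $\Sigma_s$ is the lexicographically smallest sequence of nonnegative integers with $\det(D_\tau^{(\varepsilon_i)}\varphi_j)_{i,j=0}^M\neq0$. $\mathcal{F}$ is classical with respect to $\Sigma_s$ if $\varepsilon_i=i$ for all $i$, and nonclassical otherwise. $\Sigma_2$ is the system of conics. *)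

From HB Require Import structures.
From mathcomp Require Import all_boot all_order all_algebra.
Set Implicit Arguments. Unset Strict Implicit. Unset Printing Implicit Defensive.
Import GRing.Theory.
Local Open Scope ring_scope.

(* L plays the role of an algebraic closure of F_p (= algebraic closure of F_q):
   algebraically closed, of characteristic p, and algebraic over F_p. *)
Definition is_alg_closure_Fp (p : nat) (L : closedFieldType) : Prop :=
  p \in [pchar L] /\ (forall z : L, exists2 k : nat, (0 < k)%N & z ^+ (p ^ k) = z).

(* evaluation of a bivariate polynomial P(X,Y) in {poly {poly L}} at (x,y) in K
   (the inner variable is X, the outer one Y) *)
Definition ev2 (L : nzRingType) (K : nzRingType) (iota : L -> K) (x y : K)
  (P : {poly {poly L}}) : K :=
  (map_poly (fun r : {poly L} => (map_poly iota r).[x]) P).[y].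

(* K (an extension of L via iota) is the function field Lbar(x,y) of the curve
   a X^n + b Y^m = 1: x is transcendental over L, the relation holds, and
   K is generated as a field over L by x and y. *)
Definition is_function_field_ab (L : closedFieldType) (K : fieldType)
  (iota : {rmorphism L -> K}) (a b : L) (m n : nat) (x y : K) : Prop :=
  [/\ (forall P : {poly L}, P != 0 -> (map_poly iota P).[x] != 0),
      iota a * x ^+ n + iota b * y ^+ m = 1 &
      (forall z : K, exists P Q : {poly {poly L}},
          ev2 iota x y Q != 0 /\ z = ev2 iota x y P / ev2 iota x y Q)].

(* D = (D^(k))_k is the (iterative) Hasse derivation of K with respect to the
   separating element t, trivial on the constants iota L. *)
Definition is_hasse_deriv (L : closedFieldType) (K : fieldType)
  (iota : {rmorphism L -> K}) (t : K) (D : nat -> K -> K) : Prop :=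
  (forall z, D 0%N z = z) /\
  (forall k z w, D k (z + w) = D k z + D k w) /\
  (forall k z w, D k (z * w) = \sum_(i < k.+1) D i z * D (k - i)%N w) /\
  (forall k c, (0 < k)%N -> D k (iota c) = 0) /\
  D 1%N t = 1 /\
  (forall k, (1 < k)%N -> D k t = 0) /\
  (forall i j z, D i (D j z) = ('C(i + j, i))%:R * D (i + j)%N z).

Definition hasse_wdet (K : fieldType) (M : nat) (D : nat -> K -> K)
  (eps : 'I_M.+1 -> nat) (phi : 'I_M.+1 -> K) : K :=
  \det (\matrix_(i < M.+1, j < M.+1) D (eps i) (phi j)).

Definition lex_le (M : nat) (e e' : 'I_M.+1 -> nat) : Prop :=
  e = e' \/ exists k : 'I_M.+1,
    (forall i : 'I_M.+1, (i < k)%N -> e i = e' i) /\ (e k < e' k)%N.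

Definition strictly_incr (M : nat) (e : 'I_M.+1 -> nat) : Prop :=
  forall i j : 'I_M.+1, (i < j)%N -> (e i < e j)%N.

Definition is_order_sequence (K : fieldType) (M : nat) (D : nat -> K -> K)
  (phi : 'I_M.+1 -> K) (eps : 'I_M.+1 -> nat) : Prop :=
  [/\ strictly_incr eps, hasse_wdet D eps phi != 0 &
      forall eps', strictly_incr eps' -> hasse_wdet D eps' phi != 0 ->
        lex_le eps eps'].

Definition conic_monomials (K : fieldType) (x y : K) : 'I_6 -> K :=
  fun j => nth 0 [:: 1; x; y; x ^+ 2; x * y; y ^+ 2] j.

Definition classical_conics (K : fieldType) (D : nat -> K -> K) (x y : K) : Prop :=
  is_order_sequence D (conic_monomials x y) (fun i : 'I_6 => nat_of_ord i).

Definition nonclassical_conics (K : fieldType) (D : nat -> K -> K) (x y : K) : Prop :=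
  ~ classical_conics D x y.

From HB Require Import structures.
From mathcomp Require Import all_boot all_order all_algebra.
From mathcomp Require Import ring zify.
From Stdlib Require Import FunctionalExtensionality.
Import GRing.Theory.
Local Open Scope ring_scope.

(* With D = (D^(k))_k the Hasse derivatives along x, the Wronskian of 1, x, y, x^2, xy, y^2 for
   the orders 0..5 is -D2y (2 D3y^3 - 3 D2y D3y D4y + D2y^2 D5y), so the curve is nonclassical
   for conics iff one of the two factors vanishes.  Differentiating a x^n + b y^m = 1 gives
   (x (1 - t) m)^k k! D^(k) y = y f_k(t) with t = a x^n and polynomials f_k whose coefficients
   are constants, and t is transcendental over the constants.  Hence the curve is nonclassical
   iff f_2 = 0 or the polynomial W with t^3 W = 40 f_3^3 - 45 f_2 f_3 f_4 + 9 f_2^2 f_5 vanishes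
   identically.  The extreme coefficients of W confine (m, n) mod p to 16 candidate pairs; the
   10 exceptional ones kill W, and each of the other 6 leaves a coefficient that is a nonzero
   product of powers of 2, 3 and 5. *)

Set Implicit Arguments. Unset Strict Implicit.

Lemma det_mx_col0 (R : comNzRingType) n (f : nat -> nat -> R) :
  (forall i, (0 < i)%N -> f i 0%N = 0) ->
  \det (\matrix_(i < n.+1, j < n.+1) f i j) =
  f 0%N 0%N * \det (\matrix_(i < n, j < n) f i.+1 j.+1).
Proof.
move=> f_col0; rewrite (expand_det_col _ ord0) big_ord_recl big1 ?addr0 => [|i _].
  rewrite mxE /cofactor /= expr0 mul1r; congr (_ * \det _).
  by apply/matrixP=> i j; rewrite !mxE.
by rewrite mxE f_col0 // mul0r.
Qed.

Lemma det_mx_col1 (R : comNzRingType) n (f : nat -> nat -> R) :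
  (forall i, (0 < i)%N -> f i 1%N = 0) ->
  \det (\matrix_(i < n.+2, j < n.+2) f i j) =
  - f 0%N 1%N * \det (\matrix_(i < n.+1, j < n.+1) f i.+1 (bump 1 j)).
Proof.
move=> f_col1; rewrite (expand_det_col _ (lift ord0 ord0)) big_ord_recl big1 ?addr0 => [|i _].
  rewrite mxE /cofactor /= expr1 mulN1r mulrN -mulNr; congr (_ * \det _).
  by apply/matrixP=> i j; rewrite !mxE.
by rewrite mxE f_col1 // mul0r.
Qed.

Lemma det_mx3 (R : comNzRingType) (f : nat -> nat -> R) :
  \det (\matrix_(i < 3, j < 3) f i j) =
  f 0%N 0%N * (f 1%N 1%N * f 2%N 2%N - f 1%N 2%N * f 2%N 1%N)
  - f 0%N 1%N * (f 1%N 0%N * f 2%N 2%N - f 1%N 2%N * f 2%N 0%N)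
  + f 0%N 2%N * (f 1%N 0%N * f 2%N 1%N - f 1%N 1%N * f 2%N 0%N).
Proof.
rewrite (expand_det_row _ ord0) !big_ord_recl big_ord0 /cofactor.
rewrite !(expand_det_row _ ord0) !big_ord_recl !big_ord0 /cofactor.
by rewrite !det_mx11 !mxE /=; ring.
Qed.

Lemma det_mx6_conic (R : comNzRingType) (f : nat -> nat -> R) :
  (forall i, (0 < i)%N -> f i 0%N = 0) ->
  (forall i, (1 < i)%N -> f i 1%N = 0) ->
  (forall i, (2 < i)%N -> f i 3%N = 0) ->
  \det (\matrix_(i < 6, j < 6) f i j) =
  - (f 0%N 0%N * f 1%N 1%N * f 2%N 3%N) *
  (f 3%N 2%N * (f 4%N 4%N * f 5%N 5%N - f 4%N 5%N * f 5%N 4%N)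
  - f 3%N 4%N * (f 4%N 2%N * f 5%N 5%N - f 4%N 5%N * f 5%N 2%N)
  + f 3%N 5%N * (f 4%N 2%N * f 5%N 4%N - f 4%N 4%N * f 5%N 2%N)).
Proof.
move=> f_col0 f_col1 f_col3.
rewrite (det_mx_col0 5 f_col0) (@det_mx_col0 _ 4 (fun i j => f i.+1 j.+1)) => [|i i_gt0];
  last exact: f_col1.
rewrite (@det_mx_col1 _ 2 (fun i j => f i.+2 j.+2)) => [|i i_gt0]; last exact: f_col3.
by rewrite (@det_mx3 _ (fun i j => f i.+3 (bump 1 j).+2)) /=; ring.
Qed.

Section HasseDerivation.
Variables (L : closedFieldType) (K : fieldType) (iota : {rmorphism L -> K}).
Variables (x : K) (D : nat -> K -> K).
Hypothesis HD : is_hasse_deriv iota x D.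

Lemma hasse_id z : D 0 z = z.
Proof. by case: HD. Qed.

Lemma hasseD k z w : D k (z + w) = D k z + D k w.
Proof. by case: HD => _ [-> _]. Qed.

Lemma hasseM k z w : D k (z * w) = \sum_(i < k.+1) D i z * D (k - i)%N w.
Proof. by case: HD => _ [_ [-> _]]. Qed.

Lemma hasseC k c : (0 < k)%N -> D k (iota c) = 0.
Proof. by case: HD => _ [_ [_ [HC _]]]; apply: HC. Qed.

Lemma hasse1_x : D 1%N x = 1.
Proof. by case: HD => _ [_ [_ [_ [-> _]]]]. Qed.

Lemma hasse_x k : (1 < k)%N -> D k x = 0.
Proof. by case: HD => _ [_ [_ [_ [_ [+ _]]]]]; apply. Qed.

Lemma hasse_comp i j z : D i (D j z) = 'C(i + j, i)%:R * D (i + j)%N z.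
Proof. by case: HD => _ [_ [_ [_ [_ [_ ->]]]]]. Qed.

Lemma hasse0 k : D k 0 = 0.
Proof. by apply: (@addrI _ (D k 0)); rewrite -hasseD !addr0. Qed.

Lemma hasseN k z : D k (- z) = - D k z.
Proof. by apply: (@addrI _ (D k z)); rewrite -hasseD !subrr hasse0. Qed.

Lemma hasse1 k : (0 < k)%N -> D k 1 = 0.
Proof. by move=> k_gt0; rewrite -(rmorph1 iota) hasseC. Qed.

Lemma hasse_nat k j : (0 < k)%N -> D k j%:R = 0.
Proof. by move=> k_gt0; rewrite -(rmorph_nat iota) hasseC. Qed.

Local Notation d := (D 1%N).

Lemma d1M z w : d (z * w) = z * d w + d z * w.
Proof. by rewrite hasseM !big_ord_recr big_ord0 /= add0r !hasse_id. Qed.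

Lemma d1Xn z j : d (z ^+ j) = j%:R * z ^+ j.-1 * d z.
Proof.
elim: j => [|j IH]; first by rewrite expr0 hasse1 // !mul0r.
rewrite exprS d1M IH; case: j {IH} => [|j] /=; first by rewrite !expr0; ring.
rewrite exprS -[j.+2%:R]natr1 -[j.+1%:R]natr1; ring.
Qed.

Lemma d1_hasse k z : d (D k z) = k.+1%:R * D k.+1 z.
Proof. by rewrite hasse_comp add1n bin1. Qed.

Lemma d1_horner (q : {poly L}) z :
  d (map_poly iota q).[z] = (map_poly iota q^`()).[z] * d z.
Proof.
elim/poly_ind: q => [|q c IH]; first by rewrite deriv0 !rmorph0 horner0 hasse0 mul0r.
rewrite derivMXaddC !rmorphD !rmorphM /= !map_polyX map_polyC !hornerE hasseD d1M.
by rewrite IH hasseC // addr0; ring.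
Qed.

Lemma hasse_wdet_conic y :
  hasse_wdet D (fun i : 'I_6 => nat_of_ord i) (conic_monomials x y) =
  - (D 2 y * (2%:R * D 3 y ^+ 3 - 3%:R * D 2 y * D 3 y * D 4 y + D 2 y ^+ 2 * D 5 y)).
Proof.
rewrite /hasse_wdet /conic_monomials.
rewrite (@det_mx6_conic _ (fun i j => D i (nth 0 [:: 1; x; y; x ^+ 2; x * y; y ^+ 2] j))) /=.
- rewrite !expr2 !hasseM !big_ord_recr !big_ord0 /= !subSS !subn0.
  by rewrite !hasse_id hasse1_x ?hasse_x //; ring.
- by move=> i i_gt0; rewrite hasse1.
- by move=> i i_gt1; rewrite hasse_x.
move=> i i_gt2; rewrite expr2 hasseM big1 // => j _.
have [j_gt1 | j_le1] := ltnP 1 j; first by rewrite hasse_x ?mul0r.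
by rewrite [D (i - j) x]hasse_x ?mulr0 //; lia.
Qed.

End HasseDerivation.

Lemma strictly_incr_ge M (e : 'I_M.+1 -> nat) :
  strictly_incr e -> forall i : 'I_M.+1, (i <= e i)%N.
Proof.
move=> e_incr; suff ge_e k (lt_kM : (k < M.+1)%N) : (k <= e (Ordinal lt_kM))%N.
  by case=> i lt_iM; apply: ge_e.
elim: k lt_kM => [|k IHk] lt_kM //.
exact: leq_ltn_trans (IHk (ltnW lt_kM)) (e_incr _ _ _).
Qed.

Lemma lex_le_id M (e : 'I_M.+1 -> nat) :
  strictly_incr e -> lex_le (fun i => nat_of_ord i) e.
Proof.
move=> e_incr; have e_ge := strictly_incr_ge e_incr.
have [/existsP[k0 ek0] | /existsPn e_id] := boolP [exists k : 'I_M.+1, e k != k].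
  right; have exk : exists k, (k < M.+1)%N && (e (inord k) != k).
    by exists k0; rewrite ltn_ord inord_val.
  case: (ex_minnP exk) => k /andP[lt_kM ek] k_min.
  exists (inord k); split; last by rewrite ltn_neqAle e_ge inordK // eq_sym ek.
  move=> i; rewrite inordK // => lt_ik; apply/eqP; apply: contraLR lt_ik => ei.
  by rewrite -leqNgt k_min // ltn_ord inord_val eq_sym.
by left; apply: functional_extensionality => i; apply/esym/eqP; rewrite -[_ == _]negbK e_id.
Qed.

Lemma classical_conicsE (K : fieldType) (D : nat -> K -> K) (x y : K) :
  classical_conics D x y <->
  hasse_wdet D (fun i : 'I_6 => nat_of_ord i) (conic_monomials x y) != 0.
Proof.
split=> [[] // | wdet_neq0].
by split=> // e' e'_incr _; apply: lex_le_id.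
Qed.

Section HassePolynomials.
Variables (R : comNzRingType) (M N : R).

(* For y^m = (1 - t) / b with t = a x^n, M = m and N = n, the value at t of [hasse_poly k]
   is (x (1 - t) m)^k k! D^(k) y / y. *)
Fixpoint hasse_poly k : {poly R} :=
  if k is k'.+1 then
    (N * M)%:P * 'X * (1 - 'X) * (hasse_poly k')^`()
    - (N%:P * 'X + (k'%:R * M)%:P * (1 - (1 + N)%:P * 'X)) * hasse_poly k'
  else 1.

Lemma hasse_polyS k : hasse_poly k.+1 =
  (N * M)%:P * 'X * (1 - 'X) * (hasse_poly k)^`()
  - (N%:P * 'X + (k%:R * M)%:P * (1 - (1 + N)%:P * 'X)) * hasse_poly k.
Proof. by []. Qed.

Lemma hasse_poly2 : hasse_poly 2 =
  (M * N - M * N ^+ 2)%:P * 'X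
  + (N ^+ 2 - M * N)%:P * 'X^2.
Proof. by rewrite hasse_polyS /= !derivE; ring. Qed.

Lemma hasse_poly3 : hasse_poly 3 =
  (- 2%:R * M ^+ 2 * N + 3%:R * M ^+ 2 * N ^+ 2 - M ^+ 2 * N ^+ 3)%:P * 'X
  + (- 3%:R * M * N ^+ 2 + 3%:R * M * N ^+ 3 + 4%:R * M ^+ 2 * N - 3%:R * M ^+ 2 * N ^+ 2
     - M ^+ 2 * N ^+ 3)%:P * 'X^2
  + (- N ^+ 3 + 3%:R * M * N ^+ 2 - 2%:R * M ^+ 2 * N)%:P * 'X^3.
Proof. by rewrite hasse_polyS hasse_poly2 !derivE; ring. Qed.

Lemma hasse_poly4 : hasse_poly 4 =
  (6%:R * M ^+ 3 * N - 11%:R * M ^+ 3 * N ^+ 2 + 6%:R * M ^+ 3 * N ^+ 3 - M ^+ 3 * N ^+ 4)%:P * 'X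
  + (11%:R * M ^+ 2 * N ^+ 2 - 18%:R * M ^+ 2 * N ^+ 3 + 7%:R * M ^+ 2 * N ^+ 4
     - 18%:R * M ^+ 3 * N + 22%:R * M ^+ 3 * N ^+ 2 - 4%:R * M ^+ 3 * N ^+ 4)%:P * 'X^2
  + (6%:R * M * N ^+ 3 - 6%:R * M * N ^+ 4 - 22%:R * M ^+ 2 * N ^+ 2
     + 18%:R * M ^+ 2 * N ^+ 3 + 4%:R * M ^+ 2 * N ^+ 4 + 18%:R * M ^+ 3 * N
     - 11%:R * M ^+ 3 * N ^+ 2 - 6%:R * M ^+ 3 * N ^+ 3 - M ^+ 3 * N ^+ 4)%:P * 'X^3
  + (N ^+ 4 - 6%:R * M * N ^+ 3 + 11%:R * M ^+ 2 * N ^+ 2 - 6%:R * M ^+ 3 * N)%:P * 'X^4.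
Proof. by rewrite hasse_polyS hasse_poly3 !derivE; ring. Qed.

Lemma hasse_poly5 : hasse_poly 5 =
  (- 24%:R * M ^+ 4 * N + 50%:R * M ^+ 4 * N ^+ 2 - 35%:R * M ^+ 4 * N ^+ 3
     + 10%:R * M ^+ 4 * N ^+ 4 - M ^+ 4 * N ^+ 5)%:P * 'X
  + (- 50%:R * M ^+ 3 * N ^+ 2 + 105%:R * M ^+ 3 * N ^+ 3 - 70%:R * M ^+ 3 * N ^+ 4
     + 15%:R * M ^+ 3 * N ^+ 5 + 96%:R * M ^+ 4 * N - 150%:R * M ^+ 4 * N ^+ 2
     + 35%:R * M ^+ 4 * N ^+ 3 + 30%:R * M ^+ 4 * N ^+ 4 - 11%:R * M ^+ 4 * N ^+ 5)%:P * 'X^2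
  + (- 35%:R * M ^+ 2 * N ^+ 3 + 60%:R * M ^+ 2 * N ^+ 4 - 25%:R * M ^+ 2 * N ^+ 5
     + 150%:R * M ^+ 3 * N ^+ 2 - 210%:R * M ^+ 3 * N ^+ 3 + 30%:R * M ^+ 3 * N ^+ 4
     + 30%:R * M ^+ 3 * N ^+ 5 - 144%:R * M ^+ 4 * N + 150%:R * M ^+ 4 * N ^+ 2
     + 35%:R * M ^+ 4 * N ^+ 3 - 30%:R * M ^+ 4 * N ^+ 4 - 11%:R * M ^+ 4 * N ^+ 5)%:P * 'X^3
  + (- 10%:R * M * N ^+ 4 + 10%:R * M * N ^+ 5 + 70%:R * M ^+ 2 * N ^+ 3
     - 60%:R * M ^+ 2 * N ^+ 4 - 10%:R * M ^+ 2 * N ^+ 5 - 150%:R * M ^+ 3 * N ^+ 2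
     + 105%:R * M ^+ 3 * N ^+ 3 + 40%:R * M ^+ 3 * N ^+ 4 + 5%:R * M ^+ 3 * N ^+ 5
     + 96%:R * M ^+ 4 * N - 50%:R * M ^+ 4 * N ^+ 2 - 35%:R * M ^+ 4 * N ^+ 3
     - 10%:R * M ^+ 4 * N ^+ 4 - M ^+ 4 * N ^+ 5)%:P * 'X^4
  + (- N ^+ 5 + 10%:R * M * N ^+ 4 - 35%:R * M ^+ 2 * N ^+ 3 + 50%:R * M ^+ 3 * N ^+ 2
     - 24%:R * M ^+ 4 * N)%:P * 'X^5.
Proof. by rewrite hasse_polyS hasse_poly4 !derivE; ring. Qed.

Definition conic_wronskian : {poly R} := Poly
  [:: 4%:R * M ^+ 6 * N ^+ 3 - 18%:R * M ^+ 6 * N ^+ 4 + 24%:R * M ^+ 6 * N ^+ 5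
      - 24%:R * M ^+ 6 * N ^+ 7 + 18%:R * M ^+ 6 * N ^+ 8 - 4%:R * M ^+ 6 * N ^+ 9;
     18%:R * M ^+ 5 * N ^+ 4 - 63%:R * M ^+ 5 * N ^+ 5 + 45%:R * M ^+ 5 * N ^+ 6
      + 45%:R * M ^+ 5 * N ^+ 7 - 63%:R * M ^+ 5 * N ^+ 8 + 18%:R * M ^+ 5 * N ^+ 9
      - 24%:R * M ^+ 6 * N ^+ 3 + 90%:R * M ^+ 6 * N ^+ 4 - 81%:R * M ^+ 6 * N ^+ 5
      - 45%:R * M ^+ 6 * N ^+ 6 + 99%:R * M ^+ 6 * N ^+ 7 - 45%:R * M ^+ 6 * N ^+ 8
      + 6%:R * M ^+ 6 * N ^+ 9;
     24%:R * M ^+ 4 * N ^+ 5 - 45%:R * M ^+ 4 * N ^+ 6 - 30%:R * M ^+ 4 * N ^+ 7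
      + 45%:R * M ^+ 4 * N ^+ 8 + 6%:R * M ^+ 4 * N ^+ 9 - 90%:R * M ^+ 5 * N ^+ 4
      + 252%:R * M ^+ 5 * N ^+ 5 - 90%:R * M ^+ 5 * N ^+ 6 - 180%:R * M ^+ 5 * N ^+ 7
      + 180%:R * M ^+ 5 * N ^+ 8 - 72%:R * M ^+ 5 * N ^+ 9 + 60%:R * M ^+ 6 * N ^+ 3
      - 180%:R * M ^+ 6 * N ^+ 4 + 84%:R * M ^+ 6 * N ^+ 5 + 135%:R * M ^+ 6 * N ^+ 6
      - 150%:R * M ^+ 6 * N ^+ 7 + 45%:R * M ^+ 6 * N ^+ 8 + 6%:R * M ^+ 6 * N ^+ 9;
     45%:R * M ^+ 3 * N ^+ 7 - 90%:R * M ^+ 3 * N ^+ 8 + 45%:R * M ^+ 3 * N ^+ 9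
      - 96%:R * M ^+ 4 * N ^+ 5 + 135%:R * M ^+ 4 * N ^+ 6 + 120%:R * M ^+ 4 * N ^+ 7
      - 135%:R * M ^+ 4 * N ^+ 8 - 24%:R * M ^+ 4 * N ^+ 9 + 180%:R * M ^+ 5 * N ^+ 4
      - 378%:R * M ^+ 5 * N ^+ 5 + 225%:R * M ^+ 5 * N ^+ 7 - 90%:R * M ^+ 5 * N ^+ 8
      + 63%:R * M ^+ 5 * N ^+ 9 - 80%:R * M ^+ 6 * N ^+ 3 + 180%:R * M ^+ 6 * N ^+ 4
      - 6%:R * M ^+ 6 * N ^+ 5 - 135%:R * M ^+ 6 * N ^+ 6 + 90%:R * M ^+ 6 * N ^+ 7
      - 45%:R * M ^+ 6 * N ^+ 8 - 4%:R * M ^+ 6 * N ^+ 9;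
     - 24%:R * M ^+ 2 * N ^+ 7 + 63%:R * M ^+ 2 * N ^+ 8 - 39%:R * M ^+ 2 * N ^+ 9
      - 90%:R * M ^+ 3 * N ^+ 7 + 135%:R * M ^+ 3 * N ^+ 8 - 45%:R * M ^+ 3 * N ^+ 9
      + 144%:R * M ^+ 4 * N ^+ 5 - 135%:R * M ^+ 4 * N ^+ 6 - 150%:R * M ^+ 4 * N ^+ 7
      + 90%:R * M ^+ 4 * N ^+ 8 + 51%:R * M ^+ 4 * N ^+ 9 - 180%:R * M ^+ 5 * N ^+ 4
      + 252%:R * M ^+ 5 * N ^+ 5 + 90%:R * M ^+ 5 * N ^+ 6 - 90%:R * M ^+ 5 * N ^+ 7
      - 45%:R * M ^+ 5 * N ^+ 8 - 27%:R * M ^+ 5 * N ^+ 9 + 60%:R * M ^+ 6 * N ^+ 3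
      - 90%:R * M ^+ 6 * N ^+ 4 - 36%:R * M ^+ 6 * N ^+ 5 + 45%:R * M ^+ 6 * N ^+ 6
      - 6%:R * M ^+ 6 * N ^+ 7 + 27%:R * M ^+ 6 * N ^+ 8;
     - 18%:R * M * N ^+ 8 + 18%:R * M * N ^+ 9 + 48%:R * M ^+ 2 * N ^+ 7
      - 63%:R * M ^+ 2 * N ^+ 8 + 15%:R * M ^+ 2 * N ^+ 9 + 45%:R * M ^+ 3 * N ^+ 7
      - 45%:R * M ^+ 3 * N ^+ 8 - 96%:R * M ^+ 4 * N ^+ 5 + 45%:R * M ^+ 4 * N ^+ 6
      + 60%:R * M ^+ 4 * N ^+ 7 - 9%:R * M ^+ 4 * N ^+ 9 + 90%:R * M ^+ 5 * N ^+ 4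
      - 63%:R * M ^+ 5 * N ^+ 5 - 45%:R * M ^+ 5 * N ^+ 6 + 18%:R * M ^+ 5 * N ^+ 8
      - 24%:R * M ^+ 6 * N ^+ 3 + 18%:R * M ^+ 6 * N ^+ 4 + 15%:R * M ^+ 6 * N ^+ 5
      - 9%:R * M ^+ 6 * N ^+ 7;
     - 4%:R * N ^+ 9 + 18%:R * M * N ^+ 8 - 24%:R * M ^+ 2 * N ^+ 7
      + 24%:R * M ^+ 4 * N ^+ 5 - 18%:R * M ^+ 5 * N ^+ 4 + 4%:R * M ^+ 6 * N ^+ 3].

Lemma conic_wronskianE :
  40%:R * hasse_poly 3 ^+ 3 - 45%:R * hasse_poly 2 * hasse_poly 3 * hasse_poly 4
  + 9%:R * hasse_poly 2 ^+ 2 * hasse_poly 5 = 'X^3 * conic_wronskian.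
Proof.
rewrite hasse_poly2 hasse_poly3 hasse_poly4 hasse_poly5 /conic_wronskian /= !cons_poly_def.
ring.
Qed.

End HassePolynomials.

Lemma map_hasse_poly (R S : comNzRingType) (f : {rmorphism R -> S}) (M N : R) k :
  map_poly f (hasse_poly M N k) = hasse_poly (f M) (f N) k.
Proof.
elim: k => [|k IH]; first by rewrite rmorph1.
rewrite !hasse_polyS -IH deriv_map !(rmorphB, rmorphD, rmorphM, rmorph1) /=.
by rewrite !map_polyC !map_polyX; ring.
Qed.

Lemma map_conic_wronskian (R S : comNzRingType) (f : {rmorphism R -> S}) (M N : R) :
  map_poly f (conic_wronskian M N) = conic_wronskian (f M) (f N).
Proof.
by rewrite /conic_wronskian map_Poly; congr Poly; congr [:: _; _; _; _; _; _; _]; ring.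
Qed.

Lemma conic_wronskian_horner (R : comNzRingType) (M N z : R) :
  40%:R * (hasse_poly M N 3).[z] ^+ 3
  - 45%:R * (hasse_poly M N 2).[z] * (hasse_poly M N 3).[z] * (hasse_poly M N 4).[z]
  + 9%:R * (hasse_poly M N 2).[z] ^+ 2 * (hasse_poly M N 5).[z]
  = z ^+ 3 * (conic_wronskian M N).[z].
Proof.
rewrite -[z ^+ 3]hornerXn -hornerM -conic_wronskianE -!polyC_natr.
(* Unfolding the hasse_poly k during the rewrites below would be very slow. *)
move: (hasse_poly M N 2) (hasse_poly M N 3) (hasse_poly M N 4) (hasse_poly M N 5) => f2 f3 f4 f5.
by rewrite !(hornerD, hornerN, hornerM, horner_exp, hornerCM, hornerC).
Qed.

Lemma transcendental_monomial (L K : fieldType) (iota : {rmorphism L -> K}) (x : K) :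
  (forall P : {poly L}, P != 0 -> (map_poly iota P).[x] != 0) ->
  forall (a : L) n (q : {poly L}),
  a != 0 -> (0 < n)%N -> (map_poly iota q).[iota a * x ^+ n] = 0 -> q = 0.
Proof.
move=> x_transcendental a n q a_neq0 n_gt0 q_t; apply/eqP.
have size_aXn : (1 < size (a *: 'X^n : {poly L}))%N by rewrite size_scale // size_polyXn.
rewrite -(comp_poly_eq0 q size_aXn); apply/negPn/negP => /x_transcendental.
by rewrite map_comp_poly horner_comp map_polyZ map_polyXn hornerZ hornerXn q_t eqxx.
Qed.

Section CurveExpansion.
Variables (L : closedFieldType) (K : fieldType) (iota : {rmorphism L -> K}).
Variables (x y : K) (D : nat -> K -> K) (a b : L) (m n : nat).
Hypotheses (HD : is_hasse_deriv iota x D) (m_gt0 : (0 < m)%N) (n_gt0 : (0 < n)%N).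
Hypothesis curve : iota a * x ^+ n + iota b * y ^+ m = 1.

Local Notation t := (iota a * x ^+ n).
Local Notation d := (D 1%N).

Lemma x_d1_t : x * d t = n%:R * t.
Proof.
rewrite (d1M HD) (d1Xn HD) (hasse1_x HD) (hasseC HD) // mul0r addr0.
by case: n n_gt0 => // n' _; rewrite exprS; ring.
Qed.

Lemma d1_y : x * (1 - t) * m%:R * d y = - (n%:R * t * y).
Proof.
have d1_curve : d (iota b * y ^+ m) = - d t.
  by apply/eqP; rewrite -addr_eq0 addrC -(hasseD HD) curve (hasse1 HD).
have -> : 1 - t = iota b * y ^+ m by rewrite -curve addrAC subrr add0r.
transitivity (y * (x * d (iota b * y ^+ m))); last by rewrite d1_curve mulrN x_d1_t; ring.
rewrite (d1M HD) (d1Xn HD) (hasseC HD) // mul0r addr0.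
by case: m m_gt0 => // m' _; rewrite exprS; ring.
Qed.

Lemma d1_weight k :
  x * (1 - t) * d ((x * (1 - t) * m%:R) ^+ k * k`!%:R)
  = k%:R * (1 - t - n%:R * t) * ((x * (1 - t) * m%:R) ^+ k * k`!%:R).
Proof.
rewrite (d1M HD) (hasse_nat HD) // mulr0 add0r (d1Xn HD) !(d1M HD).
rewrite (hasse_nat HD) // (hasseD HD) (hasseN HD) (hasse1 HD) // (hasse1_x HD) -x_d1_t.
by case: k => [|k] /=; rewrite ?exprS; ring.
Qed.

Lemma hasse_y k :
  (x * (1 - t) * m%:R) ^+ k * k`!%:R * D k y = y * (hasse_poly (m%:R : K) n%:R k).[t].
Proof.
have map_hp j : map_poly iota (hasse_poly (m%:R : L) n%:R j) = hasse_poly m%:R n%:R j.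
  by rewrite map_hasse_poly !rmorph_nat.
elim: k => [|k IHk]; first by rewrite /= (hasse_id HD) -polyC1 hornerC fact0 !mul1r mulr1.
move: IHk; set Q := hasse_poly _ _ k; set W := _ ^+ k * _ => IHk.
have dW : x * (1 - t) * d W = k%:R * (1 - t - n%:R * t) * W := d1_weight k.
have dIHk : W * (k.+1%:R * D k.+1 y) = y * (Q^`().[t] * d t) + d y * Q.[t] - d W * D k y.
  have := congr1 d IHk; rewrite (d1M HD) [RHS](d1M HD) (d1_hasse HD).
  by rewrite -[Q]map_hp (d1_horner HD) -deriv_map map_hp => <-; ring.
transitivity (x * (1 - t) * m%:R * (W * (k.+1%:R * D k.+1 y))).
  by rewrite /W factS natrM exprS; ring.
rewrite dIHk hasse_polyS -polyC1 !(hornerD, hornerN, hornerM, hornerX, hornerC).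
transitivity (m%:R * (1 - t) * y * Q^`().[t] * (x * d t) + Q.[t] * (x * (1 - t) * m%:R * d y)
              - m%:R * D k y * (x * (1 - t) * d W)); first by ring.
rewrite x_d1_t d1_y dW.
transitivity (n%:R * m%:R * t * (1 - t) * y * Q^`().[t] - n%:R * t * y * Q.[t]
              - m%:R * k%:R * (1 - t - n%:R * t) * (W * D k y)); first by ring.
by rewrite IHk; ring.
Qed.

End CurveExpansion.

Lemma Poly_nseq0 (R : nzRingType) n : Poly (nseq n (0 : R)) = 0.
Proof. by elim: n => //= n ->; rewrite cons_poly_def mul0r add0r. Qed.

Lemma conic_wronskian_coef0 (R : comNzRingType) (M N : R) :
  (conic_wronskian M N)`_0 =
  - 2%:R * M ^+ 6 * N ^+ 3 * (N - 1) ^+ 3 * (N - 2%:R) * (2%:R * N - 1) * (N + 1).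
Proof. by rewrite coef_Poly /=; ring. Qed.

Lemma conic_wronskian_coef6 (R : comNzRingType) (M N : R) :
  (conic_wronskian M N)`_6 =
  - 2%:R * N ^+ 3 * (N - M) ^+ 3 * (N - 2%:R * M) * (2%:R * N - M) * (N + M).
Proof. by rewrite coef_Poly /=; ring. Qed.

(* Conditions (a)-(e) of the theorem, read in a field of characteristic p at M = m, N = n. *)
Definition exceptional_pair (R : nzRingType) (M N : R) : Prop :=
  (M == 2%:R /\ N == 2%:R) \/ (M == -1 /\ N == -1) \/ (2%:R * M == 1 /\ 2%:R * N == 1) \/
  (M == 1 /\ [|| N == 1, N == 2%:R, 2%:R * N == 1 | N == -1]) \/
  (N == 1 /\ [|| M == -1, M == 2%:R | 2%:R * M == 1]).

Lemma exceptional_pair_natr (F : fieldType) p m n :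
  p \in [pchar F] -> (2 < m)%N -> (2 < n)%N ->
  ((p %| m - 2)%N /\ (p %| n - 2)%N) \/
  ((p %| m + 1)%N /\ (p %| n + 1)%N) \/
  ((p %| 2 * m - 1)%N /\ (p %| 2 * n - 1)%N) \/
  ((p %| m - 1)%N /\ (p %| (n - 1) * (n - 2) * (2 * n - 1) * (n + 1))%N) \/
  ((p %| n - 1)%N /\ (p %| (m + 1) * (m - 2) * (2 * m - 1))%N)
  <-> exceptional_pair (m%:R : F) n%:R.
Proof.
move=> pF m_gt2 n_gt2; have p_prime := pcharf_prime pF.
have dvdn_subr j k : (k <= j)%N -> (p %| j - k)%N = (j%:R == k%:R :> F).
  by move=> le_kj; rewrite (dvdn_pcharf pF) natrB // subr_eq0.
have dvdn_addr1 j : (p %| j + 1)%N = (j%:R == -1 :> F).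
  by rewrite (dvdn_pcharf pF) natrD addr_eq0.
rewrite !Euclid_dvdM // -!orbA !dvdn_addr1 !dvdn_subr ?natrM ?mulr1n //; try lia.
Qed.

Section ExceptionalPairs.
Variable F : fieldType.
Hypotheses (two_neq0 : 2%:R != 0 :> F) (three_neq0 : 3%:R != 0 :> F).
Hypothesis five_neq0 : 5%:R != 0 :> F.

Lemma half_eq (u : F) : 2%:R * u = 1 <-> u = 2%:R^-1.
Proof. by split=> [u2 | ->]; [apply: (mulfI two_neq0); rewrite u2 | ]; rewrite divff. Qed.

Lemma smooth_neq0 s a b c k :
  (-1) ^+ s * 2%:R ^+ a * 3%:R ^+ b * 5%:R ^+ c * 2%:R^-1 ^+ k != 0 :> F.
Proof. by rewrite !mulf_neq0 ?expf_neq0 ?invr_eq0 ?oppr_eq0 ?oner_eq0. Qed.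

Lemma exceptional_conic_wronskian_eq0 (M N : F) :
  exceptional_pair M N -> conic_wronskian M N = 0.
Proof.
rewrite /conic_wronskian -(Poly_nseq0 F 7) => exc; congr Poly.
by case: exc => [[/eqP-> /eqP->] | [[/eqP-> /eqP->] | [[/eqP/half_eq-> /eqP/half_eq->] |
    [[/eqP-> /or4P[/eqP-> | /eqP-> | /eqP/half_eq-> | /eqP->]] |
     [/eqP-> /or3P[/eqP-> | /eqP-> | /eqP/half_eq->]]]]]];
  congr [:: _; _; _; _; _; _; _]; field.
Qed.

Lemma conic_wronskian_eq0_exceptional (M N : F) :
  M != 0 -> N != 0 -> conic_wronskian M N = 0 -> exceptional_pair M N.
Proof.
move=> M_neq0 N_neq0 W0; have coefW0 i : (conic_wronskian M N)`_i = 0 by rewrite W0 coef0.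
have N_root : N = 1 \/ N = 2%:R \/ N = 2%:R^-1 \/ N = -1.
  move/eqP: (coefW0 0); rewrite conic_wronskian_coef0 !mulf_eq0 oppr_eq0 (negbTE two_neq0).
  rewrite (negbTE M_neq0) (negbTE N_neq0) !subr_eq0 addr_eq0 /= !orbA !orbb -!orbA.
  case/or4P=> /eqP N_eq; [left | right; left | right; right; left | right; right; right] => //.
  exact/half_eq.
move: (coefW0 2) (coefW0 3).
have [-> | [-> | [-> | ->]]] : M = N \/ M = 2%:R^-1 * N \/ M = 2%:R * N \/ M = - N.
  move/eqP: (coefW0 6); rewrite conic_wronskian_coef6 !mulf_eq0 oppr_eq0 (negbTE two_neq0).
  rewrite (negbTE N_neq0) !subr_eq0 addr_eq0 /= !orbA !orbb -!orbA.
  case/or4P=> /eqP MN; [left | right; left | right; right; left | right; right; right] => //.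
  - by apply: (mulfI two_neq0); rewrite mulrA divff ?mul1r.
  - by rewrite MN opprK.
all: case: N_root N_neq0 => [-> | [-> | [-> | ->]]] _ W2 W3.
- by do 3 right; left; rewrite !eqxx.
- by left; rewrite !eqxx.
- by do 2 right; left; rewrite divff ?eqxx.
- by right; left; rewrite !eqxx.
- by do 4 right; rewrite mulr1 divff ?eqxx ?orbT.
- by do 3 right; left; rewrite mulVf ?eqxx ?orbT.
- by exfalso; apply: (elimN eqP (smooth_neq0 0 0 3 1 20)); rewrite -W3 coef_Poly /=; field.
- by exfalso; apply: (elimN eqP (smooth_neq0 0 0 3 1 3)); rewrite -W3 coef_Poly /=; field.
- by do 4 right; rewrite mulr1 !eqxx ?orbT.
- by exfalso; apply: (elimN eqP (smooth_neq0 0 14 4 1 0)); rewrite -W2 coef_Poly /=; field.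
- by do 3 right; left; rewrite divff ?eqxx ?orbT.
- by exfalso; apply: (elimN eqP (smooth_neq0 1 5 3 1 0)); rewrite -W3 coef_Poly /=; field.
- by do 4 right; rewrite !eqxx.
- by exfalso; apply: (elimN eqP (smooth_neq0 0 11 4 1 0)); rewrite -W2 coef_Poly /=; field.
- by exfalso; apply: (elimN eqP (smooth_neq0 1 0 3 2 13)); rewrite -W3 coef_Poly /=; field.
- by do 3 right; left; rewrite opprK !eqxx ?orbT.
Qed.

Lemma hasse_poly2_eq0 (M N : F) :
  M != 0 -> N != 0 -> hasse_poly M N 2 = 0 -> M = 1 /\ N = 1.
Proof.
move=> M_neq0 N_neq0 f2_eq0; have coef_f2 i : (hasse_poly M N 2)`_i = 0 by rewrite f2_eq0 coef0.
move: (coef_f2 1%N) (coef_f2 2%N); rewrite hasse_poly2 !coefD !coefCM !coefX !coefXn /=.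
rewrite !mulr1 !mulr0 ?addr0 ?add0r => f21 f22.
have /eqP : M * N * (1 - N) = 0 by rewrite -f21; ring.
rewrite !mulf_eq0 (negbTE M_neq0) (negbTE N_neq0) subr_eq0 => /eqP N1.
have /eqP : N * (N - M) = 0 by rewrite -f22; ring.
by rewrite mulf_eq0 (negbTE N_neq0) subr_eq0 -N1 => /eqP <-.
Qed.

Lemma exceptional_pairP (M N : F) : M != 0 -> N != 0 ->
  hasse_poly M N 2 = 0 \/ conic_wronskian M N = 0 <-> exceptional_pair M N.
Proof.
move=> M_neq0 N_neq0; split; last by right; apply: exceptional_conic_wronskian_eq0.
case=> [/hasse_poly2_eq0 [] // -> -> | ]; first by do 3 right; left; rewrite !eqxx.
exact: conic_wronskian_eq0_exceptional.
Qed.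

End ExceptionalPairs.

Lemma natr_neq0_lt_pchar (F : fieldType) p k :
  p \in [pchar F] -> (0 < k < p)%N -> k%:R != 0 :> F.
Proof.
move=> pF /andP[k_gt0 lt_kp]; rewrite -(dvdn_pcharf pF).
by apply: contraTN lt_kp => /(dvdn_leq k_gt0); rewrite leqNgt.
Qed.

Lemma natr_fact_neq0 (F : fieldType) p k : p \in [pchar F] -> (k < p)%N -> k`!%:R != 0 :> F.
Proof.
move=> pF; elim: k => [|k IHk] lt_kp; first by rewrite oner_neq0.
by rewrite factS natrM mulf_neq0 ?IHk ?(natr_neq0_lt_pchar pF) // ltnW.
Qed.

Section Nonclassicality.
Variables (L : closedFieldType) (K : fieldType) (iota : {rmorphism L -> K}).
Variables (x y : K) (D : nat -> K -> K) (a b : L) (m n p : nat).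
Hypotheses (HD : is_hasse_deriv iota x D) (m_gt0 : (0 < m)%N) (n_gt0 : (0 < n)%N).
Hypothesis curve : iota a * x ^+ n + iota b * y ^+ m = 1.
Hypothesis x_transcendental : forall P : {poly L}, P != 0 -> (map_poly iota P).[x] != 0.
Hypotheses (a_neq0 : a != 0) (pL : p \in [pchar L]) (p_gt5 : (5 < p)%N).
Hypothesis p_ndvd_m : ~~ (p %| m)%N.

Local Notation t := (iota a * x ^+ n).

Let pK : p \in [pchar K] := rmorph_pchar iota pL.

Lemma horner_map_t_eq0 (q : {poly L}) : ((map_poly iota q).[t] == 0) = (q == 0).
Proof.
apply/eqP/eqP=> [|->]; last by rewrite rmorph0 horner0.
exact: (transcendental_monomial (L := L) x_transcendental a_neq0 n_gt0).
Qed.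

Lemma x_neq0 : x != 0.
Proof.
have := x_transcendental (P := 'X); rewrite (map_polyX iota) hornerX.
by apply; rewrite polyX_eq0.
Qed.

Lemma t_neq1 : t != 1.
Proof.
have := horner_map_t_eq0 ('X - 1%:P); rewrite map_polyXsubC rmorph1 hornerXsubC.
by rewrite polyXsubC_eq0 subr_eq0 => ->.
Qed.

Lemma t_neq0 : t != 0.
Proof. by rewrite mulf_neq0 ?fmorph_eq0 ?expf_neq0 ?x_neq0. Qed.

Lemma y_neq0 : y != 0.
Proof.
apply: contraNneq t_neq1 => y0; rewrite -curve y0 expr0n.
by case: m m_gt0 => // m' _; rewrite mulr0 addr0.
Qed.

Lemma hasse_scale_neq0 : x * (1 - t) * m%:R != 0.
Proof.
rewrite !mulf_neq0 ?x_neq0 -?(dvdn_pcharf pK) //.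
by rewrite subr_eq0 eq_sym t_neq1.
Qed.

Lemma hasse_weight_neq0 k : (k <= 5)%N -> (x * (1 - t) * m%:R) ^+ k * k`!%:R != 0.
Proof.
move=> le_k5; rewrite mulf_neq0 ?expf_neq0 ?hasse_scale_neq0 // (natr_fact_neq0 pK) //.
exact: leq_ltn_trans le_k5 p_gt5.
Qed.

Lemma hasse2_y_eq0 : (D 2 y == 0) = (hasse_poly (m%:R : L) n%:R 2 == 0).
Proof.
rewrite -horner_map_t_eq0 map_hasse_poly !rmorph_nat -[RHS](mulrI_eq0 _ (lregP y_neq0)).
by rewrite -(hasse_y HD m_gt0 n_gt0 curve) mulf_eq0 (negbTE (hasse_weight_neq0 (k := 2) isT)).
Qed.

Lemma hasse_wdet_factor_eq0 :
  (2%:R * D 3 y ^+ 3 - 3%:R * D 2 y * D 3 y * D 4 y + D 2 y ^+ 2 * D 5 y == 0)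
  = (conic_wronskian (m%:R : L) n%:R == 0).
Proof.
set B := _ - _ + _; set w := x * (1 - t) * m%:R.
have B_scaled : 2%:R ^+ 5 * 3%:R ^+ 3 * 5%:R * w ^+ 9 * B
                = y ^+ 3 * (t ^+ 3 * (conic_wronskian (m%:R : K) n%:R).[t]).
  transitivity (40%:R * (w ^+ 3 * 3`!%:R * D 3 y) ^+ 3
    - 45%:R * (w ^+ 2 * 2`!%:R * D 2 y) * (w ^+ 3 * 3`!%:R * D 3 y) * (w ^+ 4 * 4`!%:R * D 4 y)
    + 9%:R * (w ^+ 2 * 2`!%:R * D 2 y) ^+ 2 * (w ^+ 5 * 5`!%:R * D 5 y)).
    by rewrite /B !factS fact0; ring.
  by rewrite !(hasse_y HD m_gt0 n_gt0 curve) -conic_wronskian_horner; ring.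
rewrite -horner_map_t_eq0 map_conic_wronskian !rmorph_nat.
rewrite -[RHS](mulrI_eq0 _ (lregP (expf_neq0 3 t_neq0))).
rewrite -[RHS](mulrI_eq0 _ (lregP (expf_neq0 3 y_neq0))) -B_scaled.
have small_neq0 k : (0 < k <= 5)%N -> k%:R != 0 :> K.
  by move=> /andP[k_gt0 le_k5]; rewrite (natr_neq0_lt_pchar pK) // k_gt0 (leq_ltn_trans le_k5).
rewrite mulrI_eq0 //; apply/lregP/mulf_neq0; last exact: expf_neq0 hasse_scale_neq0.
by rewrite !mulf_neq0 ?expf_neq0 ?small_neq0.
Qed.

Lemma nonclassical_conicsE :
  nonclassical_conics D x y
  <-> hasse_poly (m%:R : L) n%:R 2 = 0 \/ conic_wronskian (m%:R : L) n%:R = 0.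
Proof.
rewrite /nonclassical_conics classical_conicsE (hasse_wdet_conic HD) oppr_eq0 mulf_eq0.
rewrite hasse2_y_eq0 hasse_wdet_factor_eq0.
by split=> [/negP/negPn/orP[]/eqP | [] ->]; [left | right | rewrite eqxx | rewrite eqxx orbT].
Qed.

End Nonclassicality.

Unset Implicit Arguments. Set Strict Implicit.

Theorem theorem3p5 (p h : nat) (L : closedFieldType) (K : fieldType)
  (iota : {rmorphism L -> K}) (a b : L) (m n : nat) (x y : K)
  (D : nat -> K -> K) :
  prime p -> (5 < p)%N -> (0 < h)%N ->
  is_alg_closure_Fp p L ->
  a != 0 -> b != 0 -> a ^+ (p ^ h) = a -> b ^+ (p ^ h) = b ->
  (2 < m)%N -> (m <= n)%N -> ~~ (p %| m * n)%N ->
  is_function_field_ab iota a b m n x y ->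
  is_hasse_deriv iota x D ->
  (nonclassical_conics D x y <->
   ((p %| m - 2)%N /\ (p %| n - 2)%N) \/
   ((p %| m + 1)%N /\ (p %| n + 1)%N) \/
   ((p %| 2 * m - 1)%N /\ (p %| 2 * n - 1)%N) \/
   ((p %| m - 1)%N /\ (p %| (n - 1) * (n - 2) * (2 * n - 1) * (n + 1))%N) \/
   ((p %| n - 1)%N /\ (p %| (m + 1) * (m - 2) * (2 * m - 1))%N)).
Proof.
move=> p_prime p_gt5 _ [pL _] a_neq0 _ _ _ m_gt2 le_mn p_ndvd_mn [x_tr curve _] HD.
have [p_ndvd_m p_ndvd_n] : ~~ (p %| m)%N /\ ~~ (p %| n)%N.
  by apply/andP; rewrite -negb_or -Euclid_dvdM.
have [m_gt0 n_gt0 n_gt2] : [/\ 0 < m, 0 < n & 2 < n]%N by split; lia.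
have natr_neq0 k : ~~ (p %| k)%N -> k%:R != 0 :> L by rewrite -(dvdn_pcharf pL).
have small_neq0 k : (0 < k <= 5)%N -> k%:R != 0 :> L.
  by move=> /andP[k_gt0 le_k5]; rewrite (natr_neq0_lt_pchar pL) // k_gt0 (leq_ltn_trans le_k5).
apply: iff_trans (nonclassical_conicsE HD m_gt0 n_gt0 curve x_tr a_neq0 pL p_gt5 p_ndvd_m) _.
apply: iff_trans (exceptional_pairP (small_neq0 2 isT) (small_neq0 3 isT) (small_neq0 5 isT)
  (natr_neq0 m p_ndvd_m) (natr_neq0 n p_ndvd_n)) _.
exact: iff_sym (exceptional_pair_natr pL m_gt2 n_gt2).
Qed.
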